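(* Let $\Delta$ be an $n$-dimensional simplex in $\mathbb{R}^n$, and let $K \subseteq \Delta$ be a compact convex set. Suppose that $K \cap F = \emptyset$ for every face $F$ of $\Delta$ such that $\dim(F) \leq n-2$. Then (i) for each unit vector $u$, the projection $K_u$ can be translated (within $u^\perp$) into the relative interior of $\Delta_u$; (ii) there exists $\epsilon > 1$ such that, for each unit vector $u$, the projection $\Delta_u$ contains a translate of $\epsilon K_u$ (the same $\epsilon$ for all $u$).
   Context: For a unit vector $u$ and a set $S\subseteq\mathbb{R}^n$, $S_u$ denotes the orthogonal projection of $S$ onto the hyperplane $u^\perp$. *)

From HB Require Import structures.
From mathcomp Require Import all_boot all_order all_algebra.
From mathcomp Require Import all_classical all_reals all_analysis.
Set Implicit Arguments. Unset Strict Implicit. Unset Printing Implicit Defensive.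
Import Order.TTheory GRing.Theory Num.Theory.
Import numFieldTopology.Exports numFieldNormedType.Exports.
Local Open Scope ring_scope.
Local Open Scope classical_set_scope.

Definition dotp (R : realType) (n : nat) (x y : 'rV[R]_n) : R := (x *m y^T) 0 0.

Definition unit_vec (R : realType) (n : nat) (u : 'rV[R]_n) : Prop := dotp u u = 1.

Definition proj_perp (R : realType) (n : nat) (u x : 'rV[R]_n) : 'rV[R]_n :=
  x - dotp x u *: u.

Definition projset (R : realType) (n : nat) (u : 'rV[R]_n) (S : set 'rV[R]_n)
  : set 'rV[R]_n := proj_perp u @` S.

Definition convex_set_of (R : realType) (n : nat) (K : set 'rV[R]_n) : Prop :=
  forall x y t, K x -> K y -> 0 <= t <= 1 -> K ((1 - t) *: x + t *: y).

Definition aff_hull (R : realType) (n : nat) (A : set 'rV[R]_n) : set 'rV[R]_n :=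
  [set y | exists (m : nat) (p : 'I_m -> 'rV[R]_n) (w : 'I_m -> R),
     (forall i, A (p i)) /\ \sum_(i < m) w i = 1 /\ y = \sum_(i < m) w i *: p i].

Definition relint (R : realType) (n : nat) (A : set 'rV[R]_n) : set 'rV[R]_n :=
  [set x | A x /\ exists e : R, 0 < e /\
     forall y, aff_hull A y -> dotp (y - x) (y - x) < e ^+ 2 -> A y].

Definition aff_indep (R : realType) (n : nat) (v : 'I_n.+1 -> 'rV[R]_n) : Prop :=
  forall w : 'I_n.+1 -> R, \sum_i w i = 0 -> \sum_i w i *: v i = 0 ->
    forall i, w i = 0.

(* convex hull of the vertices v_i, i in S : the face of the simplex spanned by S
   (its dimension is #|S| - 1); S = setT gives the simplex itself *)
Definition face (R : realType) (n : nat) (v : 'I_n.+1 -> 'rV[R]_n)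
  (S : {set 'I_n.+1}) : set 'rV[R]_n :=
  [set x | exists w : 'I_n.+1 -> R, (forall i, 0 <= w i) /\
     (forall i, i \notin S -> w i = 0) /\ \sum_i w i = 1 /\
     x = \sum_i w i *: v i].

Definition simplex (R : realType) (n : nat) (v : 'I_n.+1 -> 'rV[R]_n) :=
  face v [set: 'I_n.+1].

From HB Require Import structures.
From mathcomp Require Import all_boot all_order all_algebra.
From mathcomp Require Import all_classical all_reals all_analysis.
From mathcomp Require Import zify lra.
Set Implicit Arguments. Unset Strict Implicit. Unset Printing Implicit Defensive.
Import Order.TTheory GRing.Theory Num.Theory.
Import numFieldTopology.Exports numFieldNormedType.Exports.
Local Open Scope ring_scope.
Local Open Scope classical_set_scope.

(* Write the points of K in barycentric coordinates w, and a direction u as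
   u = \sum_i a_i v_i with \sum_i a_i = 0.  Since K misses every face with at
   most n - 1 vertices, no two coordinates of a point of K vanish together, so
   by compactness w_i + w_j >= d > 0 uniformly on K.  Let a_k be the largest
   a_i; then a_k > 0 and a_i >= - n a_k.  For small th > 0 and every x in K
   some mu makes x - th v_k + mu u a point of (1 - th) Delta: moving along u
   refills the k-th coordinate, and the bounds on w and a keep the others
   nonnegative.  Projecting along u forgets mu u, so
   (K_u - th (v_k)_u) / (1 - th) lies in Delta_u, which is (ii) with
   eps = 1 / (1 - th).  Spreading the mass th evenly over all vertices instead
   keeps every coordinate >= th / (n + 1), which gives (i). *)

Section DotProduct.
Context {R : realType} {n : nat}.
Implicit Types (x y z u : 'rV[R]_n).

Lemma dotpE x y : dotp x y = \sum_i x 0 i * y 0 i.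
Proof. by rewrite /dotp !mxE; apply: eq_bigr => i _; rewrite mxE. Qed.

Lemma dotpDl x y z : dotp (x + y) z = dotp x z + dotp y z.
Proof.
by rewrite !dotpE -big_split; apply: eq_bigr => i _; rewrite mxE mulrDl.
Qed.

Lemma dotpZl a x y : dotp (a *: x) y = a * dotp x y.
Proof.
by rewrite !dotpE mulr_sumr; apply: eq_bigr => i _; rewrite mxE mulrA.
Qed.

Lemma dotp_suml (I : finType) (F : I -> 'rV[R]_n) y :
  dotp (\sum_i F i) y = \sum_i dotp (F i) y.
Proof.
rewrite dotpE; under [RHS]eq_bigr do rewrite dotpE.
by rewrite exchange_big; apply: eq_bigr => j _; rewrite summxE mulr_suml.
Qed.

Lemma sqr_coord_le_dotp x i : x 0 i ^+ 2 <= dotp x x.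
Proof.
rewrite dotpE (bigD1 i) //= expr2 lerDl; apply: sumr_ge0 => j _.
by rewrite -expr2 sqr_ge0.
Qed.

Lemma norm_coord_lt x e i : 0 <= e -> dotp x x < e ^+ 2 -> `|x 0 i| < e.
Proof.
move=> e0 xe; rewrite -(ltr_pXn2r (_ : 0 < 2)%N) ?nnegrE ?normr_ge0 //.
by rewrite real_normK ?num_real // (le_lt_trans (sqr_coord_le_dotp x i)).
Qed.

Fact proj_perp_is_linear u : linear (proj_perp u).
Proof.
move=> a x y; rewrite /proj_perp.
by rewrite dotpDl dotpZl scalerDl scalerBr scalerA opprD addrACA.
Qed.
HB.instance Definition _ u :=
  GRing.isLinear.Build R 'rV[R]_n 'rV[R]_n _ (@proj_perp R n u)
    (proj_perp_is_linear u).

Lemma proj_perp_unit u : unit_vec u -> proj_perp u u = 0.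
Proof. by rewrite /unit_vec /proj_perp => ->; rewrite scale1r subrr. Qed.

Lemma proj_perp_shift u x mu :
  unit_vec u -> proj_perp u (x + mu *: u) = proj_perp u x.
Proof.
by move=> uu; rewrite linearD linearZ /= proj_perp_unit // scaler0 addr0.
Qed.

Lemma dotp_proj_perp u x : unit_vec u -> dotp (proj_perp u x) u = 0.
Proof.
rewrite /unit_vec /proj_perp => uu.
by rewrite dotpDl -scaleN1r dotpZl dotpZl uu mulr1 mulN1r subrr.
Qed.

Lemma proj_perp_id u x : dotp x u = 0 -> proj_perp u x = x.
Proof. by rewrite /proj_perp => ->; rewrite scale0r subr0. Qed.

Lemma unit_vec_neq0 u : unit_vec u -> u != 0.
Proof.
rewrite /unit_vec => uu; apply/eqP => u0; move: uu.
by rewrite u0 -(scale0r 0) dotpZl mul0r => /eqP; rewrite eq_sym oner_eq0.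
Qed.

Lemma aff_hull_projset_orth u (S : set 'rV[R]_n) y :
  unit_vec u -> aff_hull (projset u S) y -> dotp y u = 0.
Proof.
move=> uu [m [p [w [Sp [_ ->]]]]]; rewrite dotp_suml big1 // => i _.
by have [x _ <-] := Sp i; rewrite dotpZl dotp_proj_perp ?mulr0.
Qed.

End DotProduct.

Lemma continuous_sum (R : realType) (T : topologicalType) (V : normedModType R)
  (I : Type) (s : seq I) (F : I -> T -> V) :
  (forall i, continuous (F i)) -> continuous (fun x => \sum_(i <- s) F i x).
Proof.
move=> cF; elim: s => [|a s IHs].
  by under eq_fun do rewrite big_nil; exact: cst_continuous.
under eq_fun do rewrite big_cons.
by move=> x; apply: continuousD; [exact: cF | exact: IHs].
Qed.

Lemma compact_pos_lbound (R : realType) (T : topologicalType) (A : set T)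
  (f : T -> R) :
  compact A -> continuous f -> (forall x, A x -> 0 < f x) ->
  exists2 d, 0 < d & forall x, A x -> d <= f x.
Proof.
move=> cA cf fA; have [A0|nA0] := pselect (A !=set0); last first.
  by exists 1 => // x Ax; case: nA0; exists x.
have [c Ac cmin] := compact_EVT_min A0 cA (continuous_subspaceT cf).
exists (f c) => [|x Ax]; first by apply: fA; rewrite -inE.
by apply: cmin; rewrite inE.
Qed.

Lemma compact_pos_lbound_fin (R : realType) (T : topologicalType) (I : finType)
  (P : pred I) (A : set T) (F : I -> T -> R) :
  compact A -> (forall i, continuous (F i)) ->
  (forall i x, P i -> A x -> 0 < F i x) ->
  exists2 d, 0 < d & forall i x, P i -> A x -> d <= F i x.
Proof.
move=> cA cF FA.
have dF i : exists d : R, 0 < d /\ (P i -> forall x, A x -> d <= F i x).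
  case Pi: (P i); last by exists 1.
  by have [d d0 Hd] := compact_pos_lbound cA (cF i) (FA i ^~ Pi); exists d.
have [df Hdf] := choice dF.
exists (\big[Order.min/1]_i df i) => [|i x Pi Ax].
  by apply/bigmin_gtP; split => // i _; case: (Hdf i).
apply: (le_trans (y := df i)); first exact: bigmin_le.
by case: (Hdf i) => _; apply.
Qed.

Lemma norm_mulmx_coord_le (R : numDomainType) m p (x : 'rV[R]_m)
  (B : 'M[R]_(m, p)) c i :
  (forall j, `|x 0 j| <= c) -> `|(x *m B) 0 i| <= c * \sum_j `|B j i|.
Proof.
move=> xc; rewrite mxE mulr_sumr; apply: le_trans (ler_norm_sum _ _ _) _.
by apply: ler_sum => j _; rewrite normrM ler_wpM2r.
Qed.

Lemma sum0_argmax (R : realDomainType) m (a : 'I_m.+1 -> R) :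
  \sum_i a i = 0 -> (exists j, a j != 0) ->
  exists k, 0 < a k /\ forall i, - a i <= m%:R * a k.
Proof.
move=> a0 [j aj0]; have [k _ a_le] := @arg_maxP _ R _ ord0 xpredT a isT.
exists k; split.
  rewrite ltNge; apply: contra aj0 => ak_le0; apply/eqP.
  have Na_ge0 l : true -> 0 <= - a l by rewrite oppr_ge0 (le_trans (a_le l _)).
  apply: oppr_inj; rewrite oppr0; apply: (psumr_eq0P Na_ge0) => //.
  by rewrite sumrN a0 oppr0.
move=> i; have := a0; rewrite (bigD1 i) //= => /(canRL (addKr _)).
rewrite addr0 => <-; apply: le_trans (_ : _ <= \sum_(l | l != i) a k) _.
  by apply: ler_sum => l _; exact: a_le.
by rewrite sumr_const cardC1 card_ord mulr_natl.
Qed.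

Lemma shift_weights_nonneg (R : realFieldType) (I : eqType) (w a : I -> R)
  (k : I) (c d th : R) :
  (forall i, 0 <= w i) -> 0 < a k -> (forall i, - a i <= c * a k) ->
  (forall i, i != k -> d <= w i + w k) -> 0 <= c -> (c + 1) * th <= d ->
  exists mu, forall i, 0 <= w i - (if i == k then th else 0) + mu * a i.
Proof.
move=> w0 ak a_lb w_lb c0 thd.
pose m := Order.max 0 (th - w k).
have m0 : 0 <= m by rewrite le_max lexx.
have m_ge : th - w k <= m by rewrite le_max lexx orbT.
have cm_le i : i != k -> c * m <= w i.
  move=> ik; have := w_lb i ik; have := w0 i; have := w0 k.
  by rewrite /m; case: (leP 0 (th - w k)) => _; nra.
exists (m / a k) => i; case: (eqVneq i k) => [->|ik].
  by rewrite mulfVK ?gt_eqF //; lra.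
have : - (m / a k * a i) <= c * m.
  rewrite -mulrN; apply: le_trans (ler_wpM2l _ (a_lb i)) _.
    exact: divr_ge0 m0 (ltW ak).
  by rewrite mulrCA mulfVK ?gt_eqF.
by have := cm_le i ik; lra.
Qed.

Section Barycentric.
Variables (R : realType) (n : nat) (v : 'I_n.+1 -> 'rV[R]_n).

Definition bary_comb (w : 'rV[R]_n.+1) : 'rV[R]_n := \sum_i w 0 i *: v i.

Lemma bary_comb_continuous : continuous bary_comb.
Proof.
apply: continuous_sum => i x; apply: continuousZr_tmp; exact: coord_continuous.
Qed.

Definition bary_set (K : set 'rV[R]_n) : set 'rV[R]_n.+1 :=
  [set w : 'rV[R]_n.+1 |
    (forall i, 0 <= w 0 i) /\ \sum_i w 0 i = 1 /\ K (bary_comb w)].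

Lemma bary_set_compact K : compact K -> compact (bary_set K).
Proof.
move=> cK.
have cB := @rV_compact R n.+1 (fun=> `[0, 1]) (fun=> @segment_compact R 0 1).
set B := (X in compact X) in cB.
have clS : closed [set w : 'rV[R]_n.+1 | \sum_i w 0 i = 1].
  apply: (@preimage_closed _ _ (fun w : 'rV[R]_n.+1 => \sum_i w 0 i) [set 1]).
    by move=> w _; apply: continuous_sum => i; exact: coord_continuous.
  exact: closed_eq.
have clK : closed (bary_comb @^-1` K).
  apply: preimage_closed; first by move=> w _; exact: bary_comb_continuous.
  by apply: compact_closed => //; exact: norm_hausdorff.
have -> : bary_set K = (B `&` [set w | \sum_i w 0 i = 1]) `&` bary_comb @^-1` K.
  apply/seteqP; split => w /=.
    move=> [w0 [w1 Kw]]; split => //; split => // i.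
    rewrite /= in_itv /= w0 -w1 (bigD1 i) //= lerDl.
    by apply: sumr_ge0 => j _.
  move=> [[Bw w1] Kw]; split => // i.
  by have := Bw i; rewrite /= in_itv /= => /andP[].
by apply: compact_closedI => //; apply: compact_closedI.
Qed.

Lemma bary_set_pair_gt0 K :
  (forall S : {set 'I_n.+1}, (#|S|.+1 <= n)%N -> K `&` face v S = set0) ->
  forall w i j, bary_set K w -> i != j -> 0 < w 0 i + w 0 j.
Proof.
move=> K_faces w i j [w0 [w1 Kw]] ij.
rewrite lt_neqAle addr_ge0 // andbT; apply/eqP => /esym wij0.
have wi0 : w 0 i = 0 by apply/eqP; rewrite eq_le w0 andbT -wij0 lerDl.
have wj0 : w 0 j = 0 by move: wij0; rewrite wi0 add0r.
pose S := ~: [set i; j].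
have cardS : (#|S|.+1 <= n)%N.
  by have := cardsC [set i; j]; rewrite cards2 ij card_ord /S; lia.
suff : (K `&` face v S) (bary_comb w) by rewrite K_faces.
split => //; exists (fun k => w 0 k); split => //; split => //.
by move=> k; rewrite /S !inE negbK => /orP[] /eqP ->.
Qed.

Lemma bary_set_pair_lbound K : compact K ->
  (forall S : {set 'I_n.+1}, (#|S|.+1 <= n)%N -> K `&` face v S = set0) ->
  exists2 d, 0 < d & forall w i j, bary_set K w -> i != j -> d <= w 0 i + w 0 j.
Proof.
move=> cK K_faces.
pose F p (w : 'rV[R]_n.+1) := w 0 p.1 + w 0 p.2.
have F_cont p : continuous (F p).
  by move=> w; apply: continuousD; exact: coord_continuous.
have F_pos p w : p.1 != p.2 -> bary_set K w -> 0 < F p w.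
  by case: p => i j ij Kw; exact: bary_set_pair_gt0 K_faces _ _ _ Kw ij.
have [d d0 Hd] := compact_pos_lbound_fin (bary_set_compact cK) F_cont F_pos.
by exists d => // w i j Kw ij; exact: (Hd (i, j)).
Qed.

Definition bary_mx : 'M[R]_(n.+1, 1 + n) := row_mx (const_mx 1) (\matrix_i v i).

Lemma mul_bary_mx c : c *m bary_mx = row_mx (\sum_i c 0 i)%:M (bary_comb c).
Proof.
rewrite mul_mx_row; congr row_mx.
  apply/rowP => j; rewrite !mxE (ord1 j) eqxx mulr1n; apply: eq_bigr => i _.
  by rewrite mxE mulr1.
by rewrite mulmx_sum_row; apply: eq_bigr => i _; rewrite rowK.
Qed.

(* The unique [a] with [\sum_i a_i = 0] and [\sum_i a_i v_i = z]: the
   coordinates of the direction [z] relative to the simplex. *)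
Definition dir_coord (z : 'rV[R]_n) : 'rV[R]_n.+1 :=
  row_mx (0 : 'rV[R]_1) z *m invmx bary_mx.

Hypothesis v_indep : aff_indep v.

Lemma bary_mx_unit : bary_mx \in unitmx.
Proof.
rewrite -row_free_unit; apply/inj_row_free => c; rewrite mul_bary_mx => c0.
have /eq_row_mx[/matrixP/(_ 0 0) c_sum c_comb] :
  row_mx (\sum_i c 0 i)%:M (bary_comb c) = row_mx 0 0 by rewrite row_mx0.
rewrite !mxE eqxx mulr1n in c_sum.
by apply/rowP => i; rewrite mxE; exact: v_indep c_sum c_comb i.
Qed.

Lemma dir_coordP z : \sum_i dir_coord z 0 i = 0 /\ bary_comb (dir_coord z) = z.
Proof.
have := mulmxKV bary_mx_unit (row_mx (0 : 'rV_1) z).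
rewrite mul_bary_mx => /(@eq_row_mx _ 1 1 n)[/matrixP/(_ 0 0) a_sum a_comb].
by rewrite !mxE eqxx mulr1n in a_sum.
Qed.

Lemma dir_coord_small (eta : R) : 0 < eta -> exists2 e, 0 < e &
  forall h, dotp h h < e ^+ 2 -> forall i, `|dir_coord h 0 i| <= eta.
Proof.
move=> eta0; pose B := invmx bary_mx.
pose S := 1 + \sum_i \sum_j `|B j i|.
have S0 : 0 < S by rewrite ltr_wpDr // sumr_ge0 // => i _; exact: sumr_ge0.
have e0 : 0 < eta / S by rewrite divr_gt0.
exists (eta / S) => // h he i.
have h_small j : `|row_mx (0 : 'rV[R]_1) h 0 j| <= eta / S.
  rewrite mxE; case: splitP => j' _; first by rewrite mxE normr0 ltW.
  exact/ltW/norm_coord_lt/he/ltW.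
have sum_le : \sum_j `|B j i| <= S.
  rewrite /S [X in _ <= 1 + X](bigD1 i) //= addrCA lerDl addr_ge0 //.
  by apply: sumr_ge0 => l _; exact: sumr_ge0.
apply: le_trans (norm_mulmx_coord_le B i h_small) _.
by rewrite -[leRHS](divfK (lt0r_neq0 S0)); apply: ler_wpM2l => //; exact: ltW.
Qed.

Lemma projset_simplex_comb u (c : 'I_n.+1 -> R) :
  (forall i, 0 <= c i) -> \sum_i c i = 1 ->
  projset u (simplex v) (proj_perp u (\sum_i c i *: v i)).
Proof.
move=> c0 c1; exists (\sum_i c i *: v i) => //.
by exists c; split => //; split => [i|//]; rewrite inE.
Qed.

Lemma relint_projset_simplex u (c : 'I_n.+1 -> R) (eta : R) :
  unit_vec u -> 0 < eta -> (forall i, eta <= c i) -> \sum_i c i = 1 ->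
  relint (projset u (simplex v)) (proj_perp u (\sum_i c i *: v i)).
Proof.
move=> uu eta0 c_lb c1; split.
  by apply: projset_simplex_comb => // i; apply: le_trans (c_lb i); exact: ltW.
have [e e0 small] := dir_coord_small eta0; exists e; split => // y hull_y yz.
set z := proj_perp u _ in yz *.
have yz_orth : dotp (y - z) u = 0.
  by rewrite dotpDl -scaleN1r dotpZl (aff_hull_projset_orth uu hull_y)
    dotp_proj_perp // mulr0 addr0.
have [a_sum a_comb] := dir_coordP (y - z).
have -> : y = proj_perp u (\sum_i (c i + dir_coord (y - z) 0 i) *: v i).
  under eq_bigr do rewrite scalerDl.
  rewrite big_split /= [X in _ + X]a_comb linearD /= (proj_perp_id yz_orth).
  by rewrite addrCA subrr addr0.
apply: projset_simplex_comb; last by rewrite big_split /= c1 a_sum addr0.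
move=> i; have := small _ yz i; rewrite -/(dir_coord _) => /lerNnormlW.
by have := c_lb i; lra.
Qed.

End Barycentric.

Section ShrinkTowardVertex.
Variables (R : realType) (n : nat) (v : 'I_n.+1 -> 'rV[R]_n) (K : set 'rV[R]_n).
Hypotheses (v_indep : aff_indep v) (K_sub : K `<=` simplex v).
Variable d : R.
Hypothesis pair_lbound :
  forall w i j, bary_set v K w -> i != j -> d <= w 0 i + w 0 j.

Lemma shrink_toward_vertex u (th : R) : u != 0 -> (n%:R + 1) * th <= d ->
  exists k, forall x, K x -> exists2 b : 'I_n.+1 -> R,
    (forall i, 0 <= b i) /\ \sum_i b i = 1 - th &
    exists mu, \sum_i b i *: v i = x - th *: v k + mu *: u.
Proof.
move=> u0 thd; have [a_sum a_comb] := dir_coordP v_indep u.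
pose a i := dir_coord v u 0 i.
have [j aj0] : exists j, a j != 0.
  have [//|/forallNP a0] := pselect (exists j, a j != 0).
  case/negP: u0; rewrite -a_comb.
  apply/eqP/big1 => i _; move/negP/negbNE/eqP: (a0 i).
  by rewrite /a => ->; rewrite scale0r.
have [k [ak_gt0 a_lb]] := sum0_argmax a_sum (ex_intro _ j aj0).
exists k => x Kx; have [w [w0 [_ [w1 xE]]]] := K_sub Kx.
have Kw : bary_set v K (\row_i w i).
  split=> [l|]; first by rewrite mxE w0.
  split; first by under eq_bigr do rewrite mxE.
  by rewrite /bary_comb; under eq_bigr do rewrite mxE; rewrite -xE.
have w_lb i : i != k -> d <= w i + w k.
  by move=> ik; have := pair_lbound Kw ik; rewrite !mxE.
have [mu b0] := shift_weights_nonneg w0 ak_gt0 a_lb w_lb (ler0n _ _) thd.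
have th_sum : \sum_i (if i == k then th else 0) = th.
  by rewrite -big_mkcond big_pred1_eq.
have th_comb : \sum_i (if i == k then th else 0) *: v i = th *: v k.
  by rewrite (bigD1 k) //= eqxx big1 ?addr0 // => i /negPf->; rewrite scale0r.
exists (fun i => w i - (if i == k then th else 0) + mu * a i).
  split => //; rewrite !big_split /= sumrN -mulr_sumr a_sum mulr0 addr0.
  by rewrite w1 th_sum.
exists mu; under eq_bigr do rewrite scalerDl scalerBl -scalerA.
by rewrite !big_split /= sumrN th_comb -scaler_sumr [X in mu *: X]a_comb xE.
Qed.

Lemma projset_translate_relint u (th : R) : unit_vec u -> 0 < th ->
  (n%:R + 1) * th <= d ->
  exists t, dotp t u = 0 /\
    (fun x => x + t) @` projset u K `<=` relint (projset u (simplex v)).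
Proof.
move=> uu th0 thd.
have [k shrink] := shrink_toward_vertex (unit_vec_neq0 uu) thd.
pose N : R := n%:R + 1.
have N0 : 0 < N by rewrite ltr_wpDl.
pose g := th / N *: \sum_i v i - th *: v k.
exists (proj_perp u g); split; first exact: dotp_proj_perp.
move=> _ [_ [x Kx <-] <-]; have [b [b0 b1] [mu bE]] := shrink x Kx.
have sumE : x + g + mu *: u = \sum_i (b i + th / N) *: v i.
  under eq_bigr do rewrite scalerDl.
  rewrite big_split /= bE -scaler_sumr /g -!addrA; congr (_ + _).
  by rewrite addrC -addrA.
rewrite -(raddfD (proj_perp u)) /= -(proj_perp_shift (x + g) mu uu) sumE.
apply: (relint_projset_simplex v_indep uu (eta := th / N)).
- by rewrite divr_gt0.
- by move=> i; rewrite lerDr.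
- rewrite big_split /= b1 sumr_const card_ord -mulr_natl -natr1 -/N.
  by rewrite mulrC divfK ?gt_eqF // subrK.
Qed.

Lemma projset_scale_translate u (th : R) : unit_vec u -> th < 1 ->
  (n%:R + 1) * th <= d ->
  exists t, dotp t u = 0 /\
    (fun x => (1 - th)^-1 *: x + t) @` projset u K `<=` projset u (simplex v).
Proof.
move=> uu th1 thd.
have [k shrink] := shrink_toward_vertex (unit_vec_neq0 uu) thd.
pose s := (1 - th)^-1.
have s_gt0 : 0 < s by rewrite invr_gt0 subr_gt0.
exists (- (s * th) *: proj_perp u (v k)); split.
  by rewrite dotpZl dotp_proj_perp // mulr0.
move=> _ [_ [x Kx <-] <-]; have [b [b0 b1] [mu bE]] := shrink x Kx.
have -> : s *: proj_perp u x + - (s * th) *: proj_perp u (v k) =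
    proj_perp u (\sum_i (s * b i) *: v i).
  under eq_bigr do rewrite -scalerA.
  rewrite -scaler_sumr bE (linearZZ (proj_perp u)) /= proj_perp_shift //.
  rewrite (raddfB (proj_perp u)) /= (linearZZ (proj_perp u)) /=.
  by rewrite scaleNr [RHS]scalerBr scalerA.
apply: projset_simplex_comb => [i|]; first by rewrite mulr_ge0 ?b0 ?ltW.
by rewrite -mulr_sumr b1 mulVf // subr_eq0 eq_sym lt_eqF.
Qed.
End ShrinkTowardVertex.

Theorem lemma3p1 (R : realType) (n : nat) (v : 'I_n.+1 -> 'rV[R]_n)
  (K : set 'rV[R]_n) :
  aff_indep v ->
  compact K -> convex_set_of K -> K `<=` simplex v ->
  (forall S : {set 'I_n.+1}, (#|S|.+1 <= n)%N -> K `&` face v S = set0) ->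
  (forall u : 'rV[R]_n, unit_vec u ->
     exists t : 'rV[R]_n, dotp t u = 0 /\
       (fun x => x + t) @` projset u K `<=` relint (projset u (simplex v)))
  /\
  (exists eps : R, 1 < eps /\
     forall u : 'rV[R]_n, unit_vec u ->
       exists t : 'rV[R]_n, dotp t u = 0 /\
         (fun x => eps *: x + t) @` projset u K `<=` projset u (simplex v)).
Proof.
move=> v_indep cK _ K_sub K_faces.
have [d d0 pair_lbound] := bary_set_pair_lbound cK K_faces.
(* Any 0 < th < 1 with (n + 1) th <= d will do. *)
pose th : R := d / (d + n%:R + 1).
have D0 : 0 < d + n%:R + 1 by rewrite -addrA ltr_wpDr // ltr_wpDl.
have thE : th * (d + n%:R + 1) = d by rewrite divfK ?gt_eqF.
have th0 : 0 < th by rewrite divr_gt0.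
have n0 : 0 <= n%:R :> R by [].
have th1 : th < 1 by nra.
have thd : (n%:R + 1) * th <= d by nra.
split=> [u uu|].
  exact: (projset_translate_relint v_indep K_sub pair_lbound uu th0 thd).
exists (1 - th)^-1; split.
  by rewrite invf_gt1 ?subr_gt0 // ltrBlDr ltrDl.
move=> u uu.
exact: (projset_scale_translate v_indep K_sub pair_lbound uu th1 thd).
Qed.
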